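(* Let $f:[0,\infty)\to\mathbb{C}$ be smooth with support in $[0,\rho]$ for some $\rho<1$. For $i,j\in\mathbb{N}_0$ and $t\in(0,1)$ let $$G_{i,j}(t)=\int_{1-t}^{1}u f(u)\,[Q(t,u)]^{i}\,(u^{2}+1-t^{2})^{j}\,\mathrm{d}u,\qquad Q(t,u)=((1+t)^2-u^2)(u^2-(1-t)^2).$$ Then for every $r\in\mathbb{N}_0$ and every $m\in\mathbb{N}_0$, $$\sum_{l=0}^{\lfloor r/2\rfloor}\frac{2^{2l}\,r!}{l!\,(r-2l)!}\frac{(m+r)!}{(m+r-l)!}\,[D^{r-2l}G_{m+r-l,0}](t)=4^{r}(m+1)\cdots(m+r)\,G_{m,r}(t),\qquad t\in(0,1).$$
   Context: $D$ denotes the operator $(D\varphi)(t)=\frac{1}{t}\varphi'(t)$ and $D^{j}$ its $j$-fold iterate ($D^0$ the identity); $\lfloor\cdot\rfloor$ is the floor function; the empty product $(m+1)\cdots(m+r)$ for $r=0$ equals $1$. *)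

From Stdlib Require Import Reals.
From Stdlib Require Import Factorial.
From Coquelicot Require Import Coquelicot.
Open Scope R_scope.

Definition CRInt (g : R -> C) (a b : R) : C :=
  (RInt (fun u => Re (g u)) a b, RInt (fun u => Im (g u)) a b).

Definition CDerive (g : R -> C) (t : R) : C :=
  (Derive (fun s => Re (g s)) t, Derive (fun s => Im (g s)) t).

Definition Dop (phi : R -> C) : R -> C :=
  fun t => (RtoC (/ t) * CDerive phi t)%C.
Definition Dn (j : nat) (phi : R -> C) : R -> C := Nat.iter j Dop phi.

Definition smooth_on_nonneg (f : R -> C) : Prop :=
  forall (n : nat) (x : R), 0 < x ->
    ex_derive_n (fun u => Re (f u)) n x /\ ex_derive_n (fun u => Im (f u)) n x.

Definition Q (t u : R) : R := ((1 + t) ^ 2 - u ^ 2) * (u ^ 2 - (1 - t) ^ 2).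

Definition G (f : R -> C) (i j : nat) (t : R) : C :=
  CRInt (fun u => (RtoC (u * Q t u ^ i * (u ^ 2 + 1 - t ^ 2) ^ j) * f u)%C) (1 - t) 1.

Fixpoint rising (m r : nat) : nat :=
  match r with
  | O => 1%nat
  | S r' => (rising m r' * (m + r))%nat
  end.

From Stdlib Require Import Reals Lra Lia Factorial.
From Coquelicot Require Import Coquelicot.
Open Scope R_scope.

(* Write P(t,u) = u^2 + 1 - t^2, so that d/dt Q = 4 t P and d/dt P = -2 t.  Since Q
   vanishes at the moving endpoint u = 1 - t, differentiating under the integral sign
   gives  D G_{a+1,b} = 4 (a+1) G_{a,b+1} - 2 b G_{a+1,b-1}.  Extending the coefficients
   c(r,m,l) of the left-hand side L(r,m) by zero for 2l > r, they satisfy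
   c(r+1,m,l+1) = c(r,m+1,l+1) + 8 r (m+r+1) c(r-1,m+1,l), hence
   L(r+1,m) = D L(r,m+1) + 8 r (m+r+1) L(r-1,m+1), and the identity follows by induction
   on r.  The complex case reduces to real and imaginary parts. *)

Definition P (t u : R) : R := u ^ 2 + 1 - t ^ 2.

Lemma continuity_2d_pt_pow (f : R -> R -> R) (n : nat) (x y : R) :
  continuity_2d_pt f x y -> continuity_2d_pt (fun u v => f u v ^ n) x y.
Proof.
  intros Hf. induction n as [|n IH]; simpl.
  - apply continuity_2d_pt_const.
  - now apply (continuity_2d_pt_mult f (fun u v => f u v ^ n)).
Qed.

Ltac continuity_2d :=
  repeat first
    [ apply continuity_2d_pt_id1 | apply continuity_2d_pt_id2
    | apply continuity_2d_pt_const | apply continuity_2d_pt_mult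
    | apply continuity_2d_pt_minus | apply continuity_2d_pt_plus
    | apply continuity_2d_pt_opp | apply continuity_2d_pt_pow ].

Lemma locally_01 (A : R -> Prop) (t : R) :
  0 < t < 1 -> (forall s, 0 < s < 1 -> A s) -> locally t A.
Proof.
  intros Ht HA. apply (locally_interval _ _ (Finite 0) (Finite 1)); simpl; try lra.
  intros s Hs0 Hs1. now apply HA.
Qed.

Lemma sum_n_shift (F : nat -> R) (N : nat) :
  sum_n F (S N) = F 0%nat + sum_n (fun l => F (S l)) N.
Proof. unfold sum_n. rewrite sum_Sn_m by lia. now rewrite sum_n_m_S. Qed.

Lemma sum_n_zero_tail (F : nat -> R) (M N : nat) :
  (M <= N)%nat -> (forall l, (M < l)%nat -> F l = 0) -> sum_n F N = sum_n F M.
Proof.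
  intros HMN HF. induction HMN as [|N HMN IH]; [reflexivity|].
  rewrite sum_Sn, IH, HF by lia. apply Rplus_0_r.
Qed.

Definition DopR (phi : R -> R) (t : R) : R := / t * Derive phi t.
Definition DnR (k : nat) (phi : R -> R) : R -> R := Nat.iter k DopR phi.

Lemma DopR_ext_01 (phi psi : R -> R) (t : R) :
  (forall s, 0 < s < 1 -> phi s = psi s) -> 0 < t < 1 -> DopR phi t = DopR psi t.
Proof.
  intros Hext Ht. unfold DopR. f_equal. apply Derive_ext_loc. now apply locally_01.
Qed.

Lemma DopR_scal (c : R) (phi : R -> R) (t : R) :
  DopR (fun s => c * phi s) t = c * DopR phi t.
Proof. unfold DopR. rewrite Derive_scal. ring. Qed.

Lemma DopR_scal_sum (c : nat -> R) (F : nat -> R -> R) (N : nat) (t : R) :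
  (forall l, (l <= N)%nat -> ex_derive (F l) t) ->
  DopR (fun s => sum_n (fun l => c l * F l s) N) t = sum_n (fun l => c l * DopR (F l) t) N.
Proof.
  intros HF. unfold DopR. rewrite Derive_sum_n.
  - rewrite <- (sum_n_mult_l (/ t)). apply sum_n_ext. intros l. rewrite Derive_scal.
    unfold mult; simpl. ring.
  - intros l Hl. apply ex_derive_scal, HF, Hl.
Qed.

Definition coef (r m l : nat) : R :=
  2 ^ (2 * l) * INR (fact r) / (INR (fact l) * INR (fact (r - 2 * l)))
  * (INR (fact (m + r)) / INR (fact (m + r - l))).

Ltac fact_field :=
  repeat first
    [ rewrite fact_simpl | rewrite mult_INR | rewrite S_INR | rewrite plus_INR ];
  simpl pow;
  field; repeat split; try apply INR_fact_neq_0;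
  match goal with |- context [INR ?n] => pose proof (pos_INR n) end; lra.

Lemma coef_SS (r m l : nat) : (2 * l < r)%nat ->
  coef (S r) m (S l) * INR (S l)
  = 4 * INR (S r) * INR r * INR (m + S r) * coef (pred r) (S m) l.
Proof.
  intros Hl. destruct (Nat.le_exists_sub (2 * l + 1) r) as [s [-> _]]; [lia|].
  unfold coef.
  replace (S (s + (2 * l + 1)) - 2 * S l)%nat with s by lia.
  replace (pred (s + (2 * l + 1)) - 2 * l)%nat with s by lia.
  replace (m + S (s + (2 * l + 1)) - S l)%nat with (m + s + l + 1)%nat by lia.
  replace (S m + pred (s + (2 * l + 1)) - l)%nat with (m + s + l + 1)%nat by lia.
  replace (pred (s + (2 * l + 1)))%nat with (s + 2 * l)%nat by lia.
  replace (s + (2 * l + 1))%nat with (S (s + 2 * l))%nat by lia.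
  replace (m + S (S (s + 2 * l)))%nat with (S (S m + (s + 2 * l)))%nat by lia.
  replace (2 * S l)%nat with (S (S (2 * l))) by lia.
  fact_field.
Qed.

Lemma coef_S (r m l : nat) : (2 * S l <= r)%nat ->
  coef r (S m) (S l) * INR (S l)
  = 4 * INR r * INR (m + S r) * INR (r - 2 * l - 1) * coef (pred r) (S m) l.
Proof.
  intros Hl. destruct (Nat.le_exists_sub (2 * l + 2) r) as [s [-> _]]; [lia|].
  unfold coef.
  replace (s + (2 * l + 2) - 2 * S l)%nat with s by lia.
  replace (pred (s + (2 * l + 2)) - 2 * l)%nat with (S s) by lia.
  replace (s + (2 * l + 2) - 2 * l - 1)%nat with (S s) by lia.
  replace (S m + (s + (2 * l + 2)) - S l)%nat with (m + s + l + 2)%nat by lia.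
  replace (S m + pred (s + (2 * l + 2)) - l)%nat with (m + s + l + 2)%nat by lia.
  replace (pred (s + (2 * l + 2)))%nat with (S (s + 2 * l))%nat by lia.
  replace (s + (2 * l + 2))%nat with (S (S (s + 2 * l)))%nat by lia.
  replace (S m + S (S (s + 2 * l)))%nat with (S (S m + S (s + 2 * l)))%nat by lia.
  replace (2 * S l)%nat with (S (S (2 * l))) by lia.
  fact_field.
Qed.

Definition lhs_coef (r m l : nat) : R :=
  if (2 * l <=? r)%nat then coef r m l else 0.

Lemma lhs_coef_le (r m l : nat) : (2 * l <= r)%nat -> lhs_coef r m l = coef r m l.
Proof. intros Hl. unfold lhs_coef. now rewrite (proj2 (Nat.leb_le _ _) Hl). Qed.

Lemma lhs_coef_gt (r m l : nat) : (r < 2 * l)%nat -> lhs_coef r m l = 0.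
Proof. intros Hl. unfold lhs_coef. now rewrite (proj2 (Nat.leb_gt _ _) Hl). Qed.

Lemma lhs_coef_0 (r m : nat) : lhs_coef r m 0 = 1.
Proof.
  rewrite lhs_coef_le by lia. unfold coef.
  rewrite Nat.sub_0_r, Nat.mul_0_r, Nat.sub_0_r. simpl. field.
  split; apply INR_fact_neq_0.
Qed.

Lemma lhs_coef_S (r m l : nat) :
  lhs_coef (S r) m (S l)
  = lhs_coef r (S m) (S l) + 8 * INR r * INR (m + S r) * lhs_coef (pred r) (S m) l.
Proof.
  destruct (Nat.lt_ge_cases (2 * l) r) as [Hr | Hr].
  - apply (Rmult_eq_reg_r (INR (S l))); [|apply not_0_INR; lia].
    rewrite lhs_coef_le, coef_SS, (lhs_coef_le (pred r)) by lia.
    destruct (Nat.le_exists_sub (2 * l + 1) r) as [k [-> _]]; [lia|].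
    destruct k as [|k].
    + rewrite lhs_coef_gt by lia. rewrite !S_INR, !plus_INR, mult_INR. simpl. ring.
    + rewrite Rmult_plus_distr_r, lhs_coef_le, coef_S by lia.
      replace (S k + (2 * l + 1) - 2 * l - 1)%nat with (S k) by lia.
      rewrite !S_INR, !plus_INR, !S_INR, mult_INR. simpl. ring.
  - rewrite !lhs_coef_gt by lia.
    destruct r as [|r]; [simpl; ring|].
    rewrite lhs_coef_gt by lia. ring.
Qed.

Lemma sum_lhs_coef_S (r m : nat) (X : nat -> R) :
  sum_n (fun l => lhs_coef (S r) m l * X l) (S r)
  = sum_n (fun l => lhs_coef r (S m) l * X l) r
    + 8 * INR r * INR (m + S r)
      * sum_n (fun l => lhs_coef (pred r) (S m) l * X (S l)) (pred r).
Proof.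
  assert (Hlast : sum_n (fun l => lhs_coef r (S m) l * X l) (S r)
                  = sum_n (fun l => lhs_coef r (S m) l * X l) r).
  { apply sum_n_zero_tail; [lia|]. intros l Hl. rewrite lhs_coef_gt by lia. ring. }
  assert (Hpred : sum_n (fun l => lhs_coef (pred r) (S m) l * X (S l)) r
                  = sum_n (fun l => lhs_coef (pred r) (S m) l * X (S l)) (pred r)).
  { apply sum_n_zero_tail; [lia|]. intros l Hl. rewrite lhs_coef_gt by lia. ring. }
  rewrite <- Hlast, <- Hpred, !sum_n_shift, !lhs_coef_0,
    <- (sum_n_mult_l (8 * INR r * INR (m + S r))).
  rewrite (sum_n_ext _ (fun l => plus (lhs_coef r (S m) (S l) * X (S l))
     (mult (8 * INR r * INR (m + S r)) (lhs_coef (pred r) (S m) l * X (S l))))).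
  - rewrite sum_n_plus. symmetry. apply Rplus_assoc.
  - intros l. rewrite lhs_coef_S. unfold plus, mult; simpl. ring.
Qed.

Lemma rising_S (m r : nat) : rising m (S r) = ((m + 1) * rising (S m) r)%nat.
Proof.
  induction r as [|r IH]; [simpl; lia|].
  change (rising m (S (S r))) with (rising m (S r) * (m + S (S r)))%nat.
  rewrite IH. simpl. lia.
Qed.

Section RealPart.

Variable g : R -> R.
Hypothesis g_cont : forall u, 0 < u -> continuous g u.

Definition kernel (a b : nat) (t u : R) : R := u * Q t u ^ a * P t u ^ b * g u.

Definition GR (a b : nat) (t : R) : R := RInt (kernel a b t) (1 - t) 1.

Lemma continuous_kernel (a b : nat) (t u : R) : 0 < u -> continuous (kernel a b t) u.
Proof.
  intros Hu. apply (continuous_mult (fun v => v * Q t v ^ a * P t v ^ b) g).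
  - apply (@ex_derive_continuous R_AbsRing R_NormedModule).
    unfold Q, P. auto_derive. easy.
  - now apply g_cont.
Qed.

Lemma ex_RInt_kernel (a b : nat) (t c d : R) :
  0 < c -> 0 < d -> ex_RInt (kernel a b t) c d.
Proof.
  intros Hc Hd. apply (@ex_RInt_continuous R_CompleteNormedModule). intros u Hu.
  apply continuous_kernel.
  assert (0 < Rmin c d) by now apply Rmin_glb_lt. lra.
Qed.

Lemma is_derive_kernel (a b : nat) (t u : R) :
  is_derive (fun s => kernel (S a) b s u) t
    (t * (4 * INR (S a) * kernel a (S b) t u - 2 * INR b * kernel (S a) (pred b) t u)).
Proof.
  unfold kernel, Q, P. auto_derive; [easy|].
  destruct b as [|b]; simpl; unfold Rminus; ring.
Qed.

Lemma continuity_2d_pt_kernel (a b : nat) (t u : R) :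
  0 < u -> continuity_2d_pt (fun s v => kernel a b s v) t u.
Proof.
  intros Hu. unfold kernel, Q, P.
  apply (continuity_2d_pt_mult _ (fun s v => g v)); [continuity_2d|].
  apply (continuity_1d_2d_pt_comp g (fun s v => v)); [|continuity_2d].
  apply continuity_pt_filterlim. now apply g_cont.
Qed.

Lemma continuity_2d_pt_Derive_kernel (a b : nat) (t u : R) :
  0 < u -> continuity_2d_pt (fun s v => Derive (fun z => kernel (S a) b z v) s) t u.
Proof.
  intros Hu.
  apply continuity_2d_pt_ext with (fun s v =>
    s * (4 * INR (S a) * kernel a (S b) s v - 2 * INR b * kernel (S a) (pred b) s v)).
  { intros s v. symmetry. apply is_derive_unique, is_derive_kernel. }
  repeat first
    [ now apply continuity_2d_pt_kernel | apply continuity_2d_pt_id1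
    | apply continuity_2d_pt_const | apply continuity_2d_pt_mult
    | apply continuity_2d_pt_minus ].
Qed.

Lemma RInt_Derive_kernel (a b : nat) (t : R) : 0 < t < 1 ->
  RInt (fun u => Derive (fun s => kernel (S a) b s u) t) (1 - t) 1
  = t * (4 * INR (S a) * GR a (S b) t - 2 * INR b * GR (S a) (pred b) t).
Proof.
  intros Ht. apply is_RInt_unique. unfold GR.
  apply (is_RInt_ext (fun u => scal t (minus (scal (4 * INR (S a)) (kernel a (S b) t u))
                                 (scal (2 * INR b) (kernel (S a) (pred b) t u))))).
  { intros u _. now rewrite (is_derive_unique _ _ _ (is_derive_kernel _ _ _ _)). }
  apply (is_RInt_scal (V := R_NormedModule)), (is_RInt_minus (V := R_NormedModule));
    apply (is_RInt_scal (V := R_NormedModule)),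
      (RInt_correct (V := R_CompleteNormedModule)), ex_RInt_kernel; lra.
Qed.

(* Leibniz rule with the moving endpoint [1 - t]; the boundary term vanishes because
   [Q t (1 - t) = 0]. *)
Lemma is_derive_GR (a b : nat) (t : R) : 0 < t < 1 ->
  is_derive (GR (S a) b) t
    (t * (4 * INR (S a) * GR a (S b) t - 2 * INR b * GR (S a) (pred b) t)).
Proof.
  intros Ht. rewrite <- RInt_Derive_kernel by exact Ht.
  assert (Hbound : kernel (S a) b t (1 - t) = 0) by (unfold kernel, Q; simpl; ring).
  assert (HI := is_derive_RInt_param_bound_comp_aux2
    (fun s u => kernel (S a) b s u) (fun s => 1 - s) 1 t (-1)).
  cbv beta in HI. rewrite Hbound, Ropp_0, Rmult_0_l, Rplus_0_r in HI.
  apply HI.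
  - apply filter_forall. intros s. apply ex_RInt_kernel; lra.
  - exists (mkposreal ((1 - t) / 2) ltac:(lra)). apply filter_forall. intros s.
    apply ex_RInt_kernel; simpl; lra.
  - auto_derive; [easy|ring].
  - exists (mkposreal 1 Rlt_0_1). apply filter_forall. intros s u _.
    eexists. apply is_derive_kernel.
  - intros u Hu. apply continuity_2d_pt_Derive_kernel.
    rewrite Rmin_left in Hu; lra.
  - exists (mkposreal ((1 - t) / 2) ltac:(lra)). intros s u _ Hu. simpl in Hu.
    apply continuity_2d_pt_Derive_kernel. apply Rabs_def2 in Hu. lra.
  - apply continuity_pt_filterlim, continuous_kernel. lra.
Qed.

Lemma DopR_GR (a b : nat) (t : R) : 0 < t < 1 ->
  DopR (GR (S a) b) t = 4 * INR (S a) * GR a (S b) t - 2 * INR b * GR (S a) (pred b) t.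
Proof.
  intros Ht. unfold DopR. rewrite (is_derive_unique _ _ _ (is_derive_GR a b t Ht)).
  field. lra.
Qed.

Inductive G_span (n : nat) : (R -> R) -> Prop :=
  | G_span_zero : G_span n (fun _ => 0)
  | G_span_GR (c : R) (a b : nat) : (n <= a)%nat -> G_span n (fun t => c * GR a b t)
  | G_span_add (phi psi : R -> R) :
      G_span n phi -> G_span n psi -> G_span n (fun t => phi t + psi t)
  | G_span_ext (phi psi : R -> R) :
      G_span n phi -> (forall t, 0 < t < 1 -> phi t = psi t) -> G_span n psi.

Lemma G_span_ex_derive (n : nat) (phi : R -> R) (t : R) :
  G_span (S n) phi -> 0 < t < 1 -> ex_derive phi t.
Proof.
  intros Hphi. revert t. induction Hphi as [| c a b Ha | phi psi _ IHphi _ IHpsi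
    | phi psi _ IH Hext]; intros t Ht.
  - apply ex_derive_const.
  - destruct a as [|a]; [lia|]. apply ex_derive_scal. eexists. now apply is_derive_GR.
  - apply (ex_derive_plus (K := R_AbsRing) (V := R_NormedModule)); auto.
  - apply (ex_derive_ext_loc phi); auto. now apply locally_01.
Qed.

Lemma G_span_DopR (n : nat) (phi : R -> R) : G_span (S n) phi -> G_span n (DopR phi).
Proof.
  intros Hphi. induction Hphi as [| c a b Ha | phi psi Hphi IHphi Hpsi IHpsi
    | phi psi _ IH Hext].
  - apply (G_span_ext _ _ _ (G_span_zero n)). intros t _.
    unfold DopR. rewrite Derive_const. ring.
  - destruct a as [|a]; [lia|].
    apply (G_span_ext _ (fun t => c * (4 * INR (S a)) * GR a (S b) t
                                  + - (c * (2 * INR b)) * GR (S a) (pred b) t)).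
    + apply G_span_add; apply G_span_GR; lia.
    + intros t Ht. rewrite DopR_scal, DopR_GR by exact Ht. ring.
  - apply (G_span_ext _ (fun t => DopR phi t + DopR psi t)).
    + now apply G_span_add.
    + intros t Ht. unfold DopR. rewrite Derive_plus; [ring| |];
        now apply (G_span_ex_derive n).
  - apply (G_span_ext _ (DopR phi)); [exact IH|].
    intros t Ht. now apply DopR_ext_01.
Qed.

Lemma G_span_DnR_GR (k a b : nat) : (k <= a)%nat -> G_span (a - k) (DnR k (GR a b)).
Proof.
  induction k as [|k IH]; intros Hk.
  - apply (G_span_ext _ (fun t => 1 * GR a b t)); [apply G_span_GR; lia|].
    intros t _. apply Rmult_1_l.
  - apply G_span_DopR. replace (S (a - S k)) with (a - k)%nat by lia. apply IH. lia.
Qed.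

Lemma ex_derive_DnR_GR (k a b : nat) (t : R) :
  (k < a)%nat -> 0 < t < 1 -> ex_derive (DnR k (GR a b)) t.
Proof.
  intros Hk Ht. apply (G_span_ex_derive (a - S k)); [|exact Ht].
  replace (S (a - S k)) with (a - k)%nat by lia. apply G_span_DnR_GR. lia.
Qed.

Definition lhs (r m : nat) (t : R) : R :=
  sum_n (fun l => lhs_coef r m l * DnR (r - 2 * l) (GR (m + r - l) 0) t) r.

Lemma lhs_S (r m : nat) (t : R) : 0 < t < 1 ->
  lhs (S r) m t = DopR (lhs r (S m)) t + 8 * INR r * INR (m + S r) * lhs (pred r) (S m) t.
Proof.
  intros Ht. unfold lhs at 1. rewrite sum_lhs_coef_S. f_equal.
  - unfold lhs. rewrite DopR_scal_sum.
    + apply sum_n_ext. intros l. destruct (Nat.le_gt_cases (2 * l) r).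
      * replace (S r - 2 * l)%nat with (S (r - 2 * l)) by lia.
        now replace (m + S r - l)%nat with (S m + r - l)%nat by lia.
      * rewrite lhs_coef_gt by lia. now rewrite !Rmult_0_l.
    + intros l Hl. apply ex_derive_DnR_GR; [lia|exact Ht].
  - destruct r as [|r]; [simpl; ring|].
    unfold lhs. f_equal. apply sum_n_ext. intros l. simpl pred.
    replace (S (S r) - 2 * S l)%nat with (r - 2 * l)%nat by lia.
    now replace (m + S (S r) - S l)%nat with (S m + r - l)%nat by lia.
Qed.

Lemma lhs_closed (r m : nat) (t : R) : 0 < t < 1 ->
  lhs r m t = 4 ^ r * INR (rising m r) * GR m r t.
Proof.
  revert m t. induction r as [r IH] using (well_founded_induction Wf_nat.lt_wf).
  intros m t Ht.
  destruct r as [|r].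
  - unfold lhs. rewrite sum_O, lhs_coef_0, Nat.add_0_r, !Nat.sub_0_r. simpl. ring.
  - rewrite lhs_S, (IH (pred r) ltac:(lia) (S m) t Ht) by exact Ht.
    rewrite (DopR_ext_01 _ (fun s => 4 ^ r * INR (rising (S m) r) * GR (S m) r s));
      [| intros s Hs; apply IH; [lia | exact Hs] | exact Ht].
    rewrite DopR_scal, DopR_GR, rising_S by exact Ht.
    destruct r as [|r].
    + rewrite mult_INR, !plus_INR, !S_INR. simpl. ring.
    + change (rising (S m) (S r)) with (rising (S m) r * (S m + S r))%nat.
      rewrite !mult_INR, !plus_INR, !S_INR. simpl. ring.
Qed.

Lemma GR_identity (r m : nat) (t : R) : 0 < t < 1 ->
  sum_n (fun l => coef r m l * DnR (r - 2 * l) (GR (m + r - l) 0) t) (r / 2)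
  = 4 ^ r * INR (rising m r) * GR m r t.
Proof.
  intros Ht. rewrite <- lhs_closed by exact Ht. unfold lhs.
  pose proof (Nat.div_mod_eq r 2). pose proof (Nat.mod_upper_bound r 2).
  rewrite (sum_n_zero_tail _ (r / 2) r); [| lia |].
  - apply sum_n_ext_loc. intros l Hl. now rewrite lhs_coef_le by lia.
  - intros l Hl. rewrite lhs_coef_gt by lia. apply Rmult_0_l.
Qed.

End RealPart.

Lemma RtoC_mult_pair (c x y : R) : (RtoC c * (x, y))%C = (c * x, c * y).
Proof. unfold Cmult, RtoC; simpl. f_equal; ring. Qed.

Lemma sum_n_pair (a b : nat -> R) (N : nat) :
  sum_n (fun l => (a l, b l) : C) N = (sum_n a N, sum_n b N).
Proof.
  induction N as [|N IH]; [now rewrite !sum_O|].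
  rewrite !sum_Sn, IH. reflexivity.
Qed.

Lemma Dn_pair (k : nat) (phi : R -> C) (phi1 phi2 : R -> R) (t : R) :
  (forall s, phi s = (phi1 s, phi2 s)) -> Dn k phi t = (DnR k phi1 t, DnR k phi2 t).
Proof.
  intros Hphi. revert t. induction k as [|k IH]; intros t; [apply Hphi|].
  change (Dop (Dn k phi) t = (DopR (DnR k phi1) t, DopR (DnR k phi2) t)).
  unfold Dop, CDerive, DopR.
  rewrite (Derive_ext (fun s => Re (Dn k phi s)) (DnR k phi1)),
    (Derive_ext (fun s => Im (Dn k phi s)) (DnR k phi2))
    by (intros s; now rewrite IH).
  apply RtoC_mult_pair.
Qed.

Lemma G_pair (f : R -> C) (i j : nat) (t : R) :
  G f i j t = (GR (fun u => Re (f u)) i j t, GR (fun u => Im (f u)) i j t).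
Proof.
  unfold G, CRInt, GR, kernel, P, Re, Im.
  f_equal; apply RInt_ext; intros u _; simpl; ring.
Qed.

Lemma smooth_on_nonneg_continuous (f : R -> C) (u : R) : smooth_on_nonneg f -> 0 < u ->
  continuous (fun v => Re (f v)) u /\ continuous (fun v => Im (f v)) u.
Proof.
  intros Hf Hu. destruct (Hf 1%nat u Hu) as [HRe HIm].
  split; now apply (@ex_derive_continuous R_AbsRing R_NormedModule).
Qed.

Theorem lemma3p6 (f : R -> C) (rho : R)
  (Hsmooth : smooth_on_nonneg f) (Hrho : rho < 1)
  (Hsupp : forall u, 0 <= u -> ~ (0 <= u <= rho) -> f u = RtoC 0)
  (r m : nat) (t : R) (Ht : 0 < t < 1) :
  sum_n (fun l : nat =>
      (RtoC (2 ^ (2 * l) * INR (fact r) / (INR (fact l) * INR (fact (r - 2 * l)))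
             * (INR (fact (m + r)) / INR (fact (m + r - l))))
       * Dn (r - 2 * l) (G f (m + r - l) 0) t)%C)
    (Nat.div r 2)
  = (RtoC (4 ^ r * INR (rising m r)) * G f m r t)%C.
Proof.
  (* Only the continuity of [f] on (0,oo) is used; the support hypotheses are not. *)
  rewrite (sum_n_ext _ (fun l =>
    (coef r m l * DnR (r - 2 * l) (GR (fun u => Re (f u)) (m + r - l) 0) t,
     coef r m l * DnR (r - 2 * l) (GR (fun u => Im (f u)) (m + r - l) 0) t) : C)).
  - rewrite sum_n_pair, G_pair, RtoC_mult_pair.
    f_equal; apply GR_identity; try exact Ht; intros u Hu;
      now apply smooth_on_nonneg_continuous.
  - intros l. rewrite (Dn_pair _ _ _ _ _ (G_pair f _ _)). apply RtoC_mult_pair.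
Qed.
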